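(* There is a constant $c>0$ such that every haircomb tree on $n$ vertices contains a pair of disjoint homometric sets, each of size at least $c\,n^{2/3}$.
   Context: All graphs are finite and simple. For a graph $G=(V,E)$ and $V'\subseteq V$, the profile of $V'$ is the multiset of distances $d_G(u,v)$ over all unordered pairs $\{u,v\}$ of distinct vertices of $V'$. Two disjoint subsets $A,B\subseteq V$ are homometric if their profiles are equal; the size of the pair is $|A|=|B|$. A haircomb is a tree consisting of a collection of vertex-disjoint paths $P_1,\dots,P_m$ (called legs, each with at least one vertex) such that for each $1\le i<m$ the first vertex of $P_i$ and the first vertex of $P_{i+1}$ are joined by an edge, and there are no other edges. *)

From mathcomp Require Import all_boot.
From Stdlib Require Import Reals.
Set Implicit Arguments. Unset Strict Implicit. Unset Printing Implicit Defensive.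

(* For haircombs the relation is pinned down exactly
   (symmetric and irreflexive follows from the definition). *)

Definition walkb (T : finType) (e : rel T) (k : nat) (x y : T) : bool :=
  [exists p : k.-tuple T, path e x p && (last x p == y)].

(* A shortest walk has < #|T| edges, so searching k in 0..#|T|-1 suffices;
   [find] over [iota 0 #|T|] returns exactly that least k (and #|T| if y is
   unreachable, which never happens in a connected graph such as a tree). *)
Definition dist (T : finType) (e : rel T) (x y : T) : nat :=
  find (fun k => walkb e k x y) (iota 0 #|T|).

Fixpoint pairs (T : Type) (s : seq T) : seq (T * T) :=
  match s with
  | [::] => [::]
  | x :: s' => [seq (x, y) | y <- s'] ++ pairs s'
  end.

(* Profile of A: multiset (as a seq, compared up to permutation) of the
   distances over all unordered pairs of distinct vertices of A. *)
Definition profile (T : finType) (e : rel T) (A : {set T}) : seq nat :=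
  [seq dist e p.1 p.2 | p <- pairs (enum A)].

Definition homometric (T : finType) (e : rel T) (A B : {set T}) : Prop :=
  [disjoint A & B] /\ #|A| = #|B| /\ perm_eq (profile e A) (profile e B).

Definition consecutive (T : Type) (l : seq T) (x y : T) : Prop :=
  exists l1 l2, l = l1 ++ x :: y :: l2 \/ l = l1 ++ y :: x :: l2.

Definition haircomb (T : finType) (e : rel T) : Prop :=
  exists P : seq (seq T),
    [/\ P != [::],
        all (fun l => l != [::]) P,
        uniq (flatten P),
        (forall x : T, x \in flatten P) &
        (forall x y : T, e x y <->
           ((exists2 l, l \in P & consecutive l x y) \/
            (exists P1 P2 l1 l2,
                P = P1 ++ (x :: l1) :: (y :: l2) :: P2 \/
                P = P1 ++ (y :: l1) :: (x :: l2) :: P2)))].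

From Pilot Require Import Defs.
From mathcomp Require Import all_boot zify.
From Stdlib Require Import Reals Lia Lra.
Set Implicit Arguments. Unset Strict Implicit. Unset Printing Implicit Defensive.

(* Write the vertices as points (i, d), the d-th vertex of leg i, so that
   d(x, y) is |d - d'| on one leg and |i - j| + d + d' across legs.  Two kinds of
   isometric translations give homometric pairs: the first half of a leg against
   its second half, and, for a spine shift s > 0, the initial segments
   (i, d), d < min(L_i, L_(i+s)), of the legs i with i / s of a fixed parity
   against their translates (i + s, d).  If all these pairs have size at most X,
   then every L_i <= M = 2X + 1, there are at most M legs, and summing
   min(L_i, L_j) along diagonals gives
   n^2 <= M * sum_(i,j) min(L_i, L_j) <= 2 M (n + 2 X M) = O(X^3). *)

Lemma nth_flatten_inj (T : eqType) (x0 : T) (P : seq (seq T)) i j d d' :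
  uniq (flatten P) -> i < size P -> j < size P ->
  d < size (nth [::] P i) -> d' < size (nth [::] P j) ->
  nth x0 (nth [::] P i) d = nth x0 (nth [::] P j) d' -> i = j /\ d = d'.
Proof.
elim: P i j => [|l P IH] [|i] [|j] //=;
  rewrite cat_uniq => /and3P[ul dis uP] lt_iP lt_jP lt_d lt_d' E.
- by split => //; apply/eqP; rewrite -(nth_uniq x0 lt_d lt_d' ul) E.
- exfalso; move/negP: dis; apply; apply/hasP; exists (nth x0 (nth [::] P j) d').
    by apply/flattenP; exists (nth [::] P j); rewrite ?mem_nth.
  by rewrite /= -E mem_nth.
- exfalso; move/negP: dis; apply; apply/hasP; exists (nth x0 (nth [::] P i) d).
    by apply/flattenP; exists (nth [::] P i); rewrite ?mem_nth.
  by rewrite /= E mem_nth.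
- by case: (IH i j uP lt_iP lt_jP lt_d lt_d' E) => -> ->.
Qed.

Lemma size_nth_le_sumn (T : Type) (Q : seq (seq T)) i :
  i < size Q -> size (nth [::] Q i) <= sumn (map size Q).
Proof. by elim: Q i => [|l Q IH] [|i] //= => [_|/IH]; lia. Qed.

Lemma size_nth_add_le_sumn (T : eqType) (Q : seq (seq T)) j :
  all (fun l => l != [::]) Q -> j < size Q -> size (nth [::] Q j) + j <= sumn (map size Q).
Proof.
elim: Q j => [|l Q IH] [|j] //= /andP[l_ne Q_ne]; first lia.
have : 0 < size l by rewrite lt0n size_eq0.
by move=> l_gt0 /(IH _ Q_ne); lia.
Qed.

(* Every leg strictly between legs [i] and [j] contributes at least one to the sum. *)
Lemma size_nth2_le_sumn (T : eqType) (Q : seq (seq T)) i j :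
  all (fun l => l != [::]) Q -> i < j -> j < size Q ->
  size (nth [::] Q i) + size (nth [::] Q j) + (j - i - 1) <= sumn (map size Q).
Proof.
elim: Q i j => [|l Q IH] [|i] [|j] //= /andP[_ Q_ne] lt_ij lt_jQ.
- by have := size_nth_add_le_sumn Q_ne lt_jQ; lia.
- by have := IH i j Q_ne lt_ij lt_jQ; lia.
Qed.

Lemma cat_take_nth2_drop (A : Type) (x0 : A) (l : seq A) d : d.+1 < size l ->
  l = take d l ++ nth x0 l d :: nth x0 l d.+1 :: drop d.+2 l.
Proof.
move=> lt_dl; rewrite -{1}(cat_take_drop d l) (drop_nth x0) ?(drop_nth x0 (n := d.+1)) //; lia.
Qed.

Lemma nth_cat_mid (A : Type) (x0 : A) l1 a b l2 :
  nth x0 (l1 ++ a :: b :: l2) (size l1) = a /\ nth x0 (l1 ++ a :: b :: l2) (size l1).+1 = b.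
Proof. by rewrite !nth_cat ltnn ltnNge leqnSn /= subnn subSnn. Qed.

Lemma exists_argmax_seq (A : eqType) (f : A -> nat) (s : seq A) : s != [::] ->
  exists2 a, a \in s & forall b, b \in s -> f b <= f a.
Proof.
elim: s => [|x s IH] // _; have [-> | /IH [a a_s a_max]] := eqVneq s [::].
  by exists x; rewrite ?mem_head // => b; rewrite inE => /eqP ->.
have [le_ax | lt_xa] := leqP (f a) (f x).
- exists x; first exact: mem_head.
  by move=> b; rewrite inE => /orP[/eqP -> // | /a_max/leq_trans]; apply.
- exists a; first by rewrite inE a_s orbT.
  by move=> b; rewrite inE => /orP[/eqP -> | /a_max //]; exact: ltnW.
Qed.

Section PairImage.
Variables (A : eqType) (f : A -> A -> nat).

Definition pair_image (s : seq A) : seq nat := [seq f p.1 p.2 | p <- pairs s].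

Lemma pair_image_cons x s : pair_image (x :: s) = [seq f x y | y <- s] ++ pair_image s.
Proof. by rewrite /pair_image /= map_cat -map_comp. Qed.

Hypothesis f_sym : forall x y, f x y = f y x.

Lemma perm_pair_image_mid x s1 s2 :
  perm_eq (pair_image (s1 ++ x :: s2)) (pair_image (x :: s1 ++ s2)).
Proof.
elim: s1 => [|a s1 IH] /=; first exact: perm_refl.
move/permP: IH => IH; apply/permP => c.
rewrite !pair_image_cons !count_cat IH !pair_image_cons !count_cat /= !map_cat !count_cat /=.
rewrite (f_sym a x); lia.
Qed.

Lemma perm_pair_image s t : perm_eq s t -> perm_eq (pair_image s) (pair_image t).
Proof.
elim: s t => [|x s IH] t; first by rewrite perm_sym => /perm_nilP ->.
move=> st; have x_t : x \in t by rewrite -(perm_mem st) mem_head.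
case/splitPr: x_t st => t1 t2 st.
have st' : perm_eq s (t1 ++ t2).
  by rewrite -(perm_cons x); apply: (perm_trans st); rewrite -cat1s perm_catCA.
rewrite perm_sym; apply: (perm_trans (perm_pair_image_mid _ _ _)).
by rewrite !pair_image_cons perm_sym; apply: perm_cat; [exact: perm_map | exact: IH].
Qed.

End PairImage.

Lemma pair_image_map (A B : eqType) (f : B -> B -> nat) (g : A -> B) s :
  pair_image f (map g s) = pair_image (fun a b => f (g a) (g b)) s.
Proof. by elim: s => [|x s IH] //; rewrite /= !pair_image_cons IH -map_comp. Qed.

Lemma eq_in_pair_image (A : eqType) (f g : A -> A -> nat) s :
  {in s &, f =2 g} -> pair_image f s = pair_image g s.
Proof.
elim: s => [|x s IH] // fg; rewrite !pair_image_cons; congr (_ ++ _).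
  by apply/eq_in_map => y ys; apply: fg; rewrite ?mem_head ?inE ?ys ?orbT.
by apply: IH => a b a_s b_s; apply: fg; rewrite inE ?a_s ?b_s orbT.
Qed.

Lemma profile_uniq (T : finType) (e : rel T) (s : seq T) :
  (forall x y, Defs.dist e x y = Defs.dist e y x) -> uniq s ->
  perm_eq (profile e [set:: s]) (pair_image (Defs.dist e) s).
Proof.
move=> dist_sym s_uniq; apply: perm_pair_image => //.
by apply: uniq_perm (enum_uniq _) s_uniq _ => x; rewrite mem_enum inE.
Qed.

Lemma sum_ord_if_eq m k (G : nat -> nat) :
  \sum_(j < m) (if (j : nat) == k then G j else 0) = if k < m then G k else 0.
Proof.
elim: m => [|m IH]; first by rewrite big_ord0.
rewrite big_ord_recr /= IH; case: (ltngtP k m) => [lt_km | lt_mk | ->].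
- by rewrite ltnS ltnW // addn0.
- by rewrite ltnNge lt_mk.
- by rewrite ?ltnn ?eqxx ltnSn.
Qed.

Lemma sum_ord_if_eq_add m i j c : j < m ->
  \sum_(s < m) (if j == i + s then c else 0) = if i <= j then c else 0.
Proof.
move=> lt_jm; have [le_ij | lt_ji] := leqP i j.
- rewrite (eq_bigr (fun s : 'I_m => if (s : nat) == j - i then c else 0)) => [|s _].
    by rewrite (sum_ord_if_eq m (j - i) (fun=> c)) ifT //; lia.
  by rewrite (_ : (j == i + s) = ((s : nat) == j - i)) //; apply/eqP/eqP; lia.
- by rewrite big1 // => s _; rewrite ifF //; apply/eqP; lia.
Qed.

Section LegLengths.
Variables (m : nat) (L : nat -> nat).

(* The part of the [s]-th diagonal of [(minn (L i) (L j))_(i,j)] on rows [i] with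
   [odd (i %/ s) == b]: these rows [i] and their partners [i + s] are disjoint. *)
Definition shift_weight s b i :=
  if (i + s < m) && (odd (i %/ s) == b) then minn (L i) (L (i + s)) else 0.

Definition diagonal s := \sum_(i < m) if i + s < m then minn (L i) (L (i + s)) else 0.

Lemma diagonal_shift_weight s :
  diagonal s = \sum_(i < m) shift_weight s true i + \sum_(i < m) shift_weight s false i.
Proof.
rewrite /diagonal -big_split /=; apply: eq_bigr => i _; rewrite /shift_weight.
by case: (odd _); case: (_ + s < m); rewrite /= ?addn0.
Qed.

Lemma diagonal0 : diagonal 0 = \sum_(i < m) L i.
Proof. by apply: eq_bigr => i _; rewrite addn0 ltn_ord minnn. Qed.

Lemma diagonal1_ge : (forall i, i < m -> 0 < L i) -> m.-1 <= diagonal 1.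
Proof.
move=> L_gt0; rewrite /diagonal; case: m L_gt0 => [|m'] L_gt0 //=.
rewrite big_ord_recr /= addn1 ltnn addn0.
rewrite -[m' in X in X <= _]card_ord -sum1_card; apply: leq_sum => i _.
by rewrite addn1 ltnS ltn_ord leq_min !L_gt0 //; have := ltn_ord i; lia.
Qed.

Lemma sum_min_le_diagonals :
  \sum_(i < m) \sum_(j < m) minn (L i) (L j) <= 2 * \sum_(s < m) diagonal s.
Proof.
pose upper := \sum_(i < m) \sum_(j < m) if i <= j then minn (L i) (L j) else 0.
have -> : \sum_(s < m) diagonal s = upper.
  rewrite /diagonal exchange_big /=; apply: eq_bigr => i _.
  under eq_bigr => s _ do rewrite -(sum_ord_if_eq m (i + s) (fun j => minn (L i) (L j))).
  rewrite exchange_big /=; apply: eq_bigr => j _.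
  rewrite -(sum_ord_if_eq_add i (minn (L i) (L j)) (ltn_ord j)).
  by apply: eq_bigr => s _; case: eqP => // ->.
have lower_le : \sum_(i < m) \sum_(j < m) (if j < i then minn (L i) (L j) else 0) <= upper.
  rewrite exchange_big /=; apply: leq_sum => i _; apply: leq_sum => j _.
  by rewrite minnC; case: ltnP => // /ltnW ->.
suff -> : \sum_(i < m) \sum_(j < m) minn (L i) (L j) =
          upper + \sum_(i < m) \sum_(j < m) (if j < i then minn (L i) (L j) else 0) by lia.
rewrite -big_split /=; apply: eq_bigr => i _; rewrite -big_split /=; apply: eq_bigr => j _.
by case: leqP; rewrite ?addn0.
Qed.

Lemma sqr_sum_le_sum_min M : (forall i, i < m -> L i <= M) ->
  (\sum_(i < m) L i) * (\sum_(i < m) L i) <= M * \sum_(i < m) \sum_(j < m) minn (L i) (L j).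
Proof.
move=> le_LM; rewrite big_distrl /= big_distrr /=; apply: leq_sum => i _.
rewrite big_distrr /= big_distrr /=; apply: leq_sum => j _.
have := le_LM i (ltn_ord i); have := le_LM j (ltn_ord j); rewrite /minn.
by case: ltnP => _; nia.
Qed.

Lemma sqr_sum_le_shift_weights X : 0 < m -> (forall i, i < m -> 0 < L i) ->
  (forall i, i < m -> L i %/ 2 <= X) ->
  (forall s b, 0 < s -> s < m -> \sum_(i < m) shift_weight s b i <= X) ->
  (\sum_(i < m) L i) * (\sum_(i < m) L i) <= 2 * (2 * X + 1) * (2 * X + 1) * (4 * X + 1).
Proof.
move=> m_gt0 L_gt0 L_le s_le; set n := \sum_(i < m) L i; set M := 2 * X + 1.
have le_LM i : i < m -> L i <= M by move/L_le; rewrite /M; lia.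
have diag_le s : 0 < s -> s < m -> diagonal s <= 2 * X.
  move=> s_gt0 lt_sm; rewrite diagonal_shift_weight.
  by have := s_le s true s_gt0 lt_sm; have := s_le s false s_gt0 lt_sm; lia.
have le_mM : m <= M.
  have [le_m1 | lt_1m] := leqP m 1; first by rewrite /M; lia.
  by have := diag_le 1 isT lt_1m; have := diagonal1_ge L_gt0; rewrite /M; lia.
have le_nM : n <= M * M.
  have : n <= \sum_(i < m) M by apply: leq_sum => i _; exact: le_LM.
  by rewrite sum_nat_const card_ord; nia.
have diag_sum : \sum_(s < m) diagonal s <= n + (m - 1) * (2 * X).
  rewrite -(prednK m_gt0) big_ord_recl diagonal0 -/n subn1 /=.
  rewrite -[m.-1 in X in _ <= _ + X * _]card_ord -sum_nat_const leq_add2l.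
  by apply: leq_sum => s _; apply: diag_le; rewrite /bump /=; have := ltn_ord s; lia.
have := sqr_sum_le_sum_min le_LM; have := sum_min_le_diagonals.
by rewrite -/n /M in le_mM le_nM diag_sum *; nia.
Qed.

End LegLengths.

Lemma Rpower_two_thirds_le (n X : nat) : 0 < n -> n * n <= 125 * (X * X * X) ->
  (1 / 5 * Rpower (INR n) (2 / 3) <= INR X)%R.
Proof.
move=> n_gt0 le_nX.
have n_gt0R : (0 < INR n)%R by apply: lt_0_INR; apply/ltP.
set y := Rpower (INR n) (2 / 3).
have y_gt0 : (0 < y)%R by apply: exp_pos.
have y3 : (y ^ 3 = INR n ^ 2)%R.
  rewrite -(Rpower_pow 3 _ y_gt0) /y Rpower_mult -(Rpower_pow 2 _ n_gt0R).
  by congr Rpower; simpl; field.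
have le_nXR : (INR n ^ 2 <= 125 * INR X ^ 3)%R.
  by have := le_INR _ _ (elimT leP le_nX); rewrite !mult_INR (INR_IZR_INZ 125) /=; lra.
have X_ge0 := pos_INR X.
apply: Rnot_lt_le => lt_Xy.
have : ((5 * INR X) ^ 3 < y ^ 3)%R.
  have sq_pos : (0 < y * y + y * (5 * INR X) + (5 * INR X) * (5 * INR X))%R by nra.
  have : (0 < (y - 5 * INR X) * (y * y + y * (5 * INR X) + (5 * INR X) * (5 * INR X)))%R.
    by apply: Rmult_lt_0_compat; lra.
  simpl; lra.
lra.
Qed.

Definition comb_dist (i d j d' : nat) : nat :=
  if i == j then (d - d') + (d' - d) else (i - j) + (j - i) + d + d'.

Definition comb_adj (i d j d' : nat) : bool :=
  ((i == j) && ((d == d'.+1) || (d' == d.+1))) ||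
  [&& d == 0, d' == 0 & ((i == j.+1) || (j == i.+1))].

Lemma comb_dist_sym i d j d' : comb_dist i d j d' = comb_dist j d' i d.
Proof. by rewrite /comb_dist eq_sym; case: eqP => _; lia. Qed.

Lemma comb_dist_eq0 i d j d' : comb_dist i d j d' = 0 -> i = j /\ d = d'.
Proof. by rewrite /comb_dist; case: (i =P j) => ?; lia. Qed.

Lemma comb_adjP i d j d' : reflect
  ((i = j /\ (d = d'.+1 \/ d' = d.+1)) \/ (d = 0 /\ d' = 0 /\ (i = j.+1 \/ j = i.+1)))
  (comb_adj i d j d').
Proof.
rewrite /comb_adj; apply: (iffP idP).
  by case/orP=> [/andP[/eqP ? /orP[/eqP ?|/eqP ?]] | /and3P[/eqP ? /eqP ? /orP[/eqP ?|/eqP ?]]];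
    tauto.
by case=> [[-> [->|->]] | [-> [-> [->|->]]]]; rewrite !eqxx ?orbT.
Qed.

Lemma comb_adj_sym i d j d' : comb_adj i d j d' = comb_adj j d' i d.
Proof. by apply/comb_adjP/comb_adjP; lia. Qed.

Lemma comb_dist_adj i d j d' k f : comb_adj i d j d' -> comb_dist i d k f <= comb_dist j d' k f + 1.
Proof. by case/comb_adjP=> H; rewrite /comb_dist; case: (i =P k) => ?; case: (j =P k) => ?; lia. Qed.

Lemma find_iota_first (a : pred nat) k N : k < N -> a k -> (forall j, j < k -> ~~ a j) ->
  find a (iota 0 N) = k.
Proof.
move=> lt_kN ak not_a; rewrite -(subnKC (ltnW lt_kN)) iotaD find_cat size_iota add0n.
have -> : has a (iota 0 k) = false.
  by apply/negbTE/hasPn => j; rewrite mem_iota => /andP[_]; exact: not_a.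
by rewrite -(subnSK lt_kN) /= ak addn0.
Qed.

Section Haircomb.
Variables (T : finType) (e : rel T) (P : seq (seq T)) (x0 : T).
Hypotheses (P_legs : all (fun l => l != [::]) P) (P_uniq : uniq (flatten P))
  (P_cover : forall x, x \in flatten P)
  (P_edge : forall x y : T, e x y <->
     ((exists2 l, l \in P & consecutive l x y) \/
      (exists P1 P2 l1 l2,
         P = P1 ++ (x :: l1) :: (y :: l2) :: P2 \/
         P = P1 ++ (y :: l1) :: (x :: l2) :: P2))).

Definition leg_len i := size (nth [::] P i).
Definition vert i d := nth x0 (nth [::] P i) d.
Definition in_comb i d := (i < size P) && (d < leg_len i).
Definition leg_of x := find (fun l => x \in l) P.
Definition depth_of x := index x (nth [::] P (leg_of x)).

Lemma leg_len_gt0 i : i < size P -> 0 < leg_len i.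
Proof. by move=> lt_iP; rewrite lt0n size_eq0; apply: (allP P_legs); rewrite mem_nth. Qed.

Lemma vert_inj i d j d' : in_comb i d -> in_comb j d' -> vert i d = vert j d' -> i = j /\ d = d'.
Proof. by move=> /andP[? ?] /andP[? ?]; apply: nth_flatten_inj. Qed.

Lemma in_comb_coord x : in_comb (leg_of x) (depth_of x) /\ vert (leg_of x) (depth_of x) = x.
Proof.
have has_x : has (fun l => x \in l) P by case/flattenP: (P_cover x) => l lP xl; apply/hasP; exists l.
have x_leg := nth_find [::] has_x; split; last by rewrite /vert /depth_of nth_index.
by rewrite /in_comb /leg_len /depth_of index_mem x_leg andbT /leg_of -has_find.
Qed.

Lemma coord_vert i d : in_comb i d -> leg_of (vert i d) = i /\ depth_of (vert i d) = d.
Proof.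
move=> ci; have [cx vx] := in_comb_coord (vert i d).
by have [-> ->] := vert_inj cx ci vx.
Qed.

Lemma coord_leg_step k l1 x y l2 : k < size P -> nth [::] P k = l1 ++ x :: y :: l2 ->
  [/\ leg_of x = k, leg_of y = k, depth_of x = size l1 & depth_of y = (size l1).+1].
Proof.
move=> lt_kP Pk; have [nx ny] := nth_cat_mid x0 l1 x y l2.
have ck d : d < (size l1).+2 -> in_comb k d by rewrite /in_comb lt_kP /leg_len Pk size_cat /=; lia.
have [xk xd] := coord_vert (ck (size l1) (leqW (ltnSn _))).
have [yk yd] := coord_vert (ck (size l1).+1 (ltnSn _)).
by rewrite /vert Pk nx ny in xk xd yk yd.
Qed.

Lemma coord_spine_step P1 P2 x y l1 l2 : P = P1 ++ (x :: l1) :: (y :: l2) :: P2 ->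
  [/\ leg_of x = size P1, leg_of y = (size P1).+1, depth_of x = 0 & depth_of y = 0].
Proof.
move=> EP; have [nx ny] := nth_cat_mid [::] P1 (x :: l1) (y :: l2) P2.
have cx : in_comb (size P1) 0 by rewrite /in_comb /leg_len EP nx size_cat /=; lia.
have cy : in_comb (size P1).+1 0 by rewrite /in_comb /leg_len EP ny size_cat /=; lia.
have [xk xd] := coord_vert cx; have [yk yd] := coord_vert cy.
by rewrite /vert EP nx ny in xk xd yk yd.
Qed.

Lemma comb_adj_of_edge x y : e x y -> comb_adj (leg_of x) (depth_of x) (leg_of y) (depth_of y).
Proof.
suff step x' y' : (exists2 l, l \in P & exists l1 l2, l = l1 ++ x' :: y' :: l2) \/
                  (exists P1 P2 l1 l2, P = P1 ++ (x' :: l1) :: (y' :: l2) :: P2) ->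
                  comb_adj (leg_of x') (depth_of x') (leg_of y') (depth_of y').
  move/P_edge=> [[l lP [l1 [l2 [E|E]]]] | [P1 [P2 [l1 [l2 [E|E]]]]]].
  - by apply: step; left; exists l => //; exists l1, l2.
  - by rewrite comb_adj_sym; apply: step; left; exists l => //; exists l1, l2.
  - by apply: step; right; exists P1, P2, l1, l2.
  - by rewrite comb_adj_sym; apply: step; right; exists P1, P2, l1, l2.
case=> [[l lP [l1 [l2 E]]] | [P1 [P2 [l1 [l2 /coord_spine_step[-> -> -> ->]]]]]].
- have [k lt_kP Pk] : exists2 k, k < size P & nth [::] P k = l.
    by exists (index l P); rewrite ?index_mem ?nth_index.
  rewrite -Pk in E; case: (coord_leg_step lt_kP E) => -> -> -> ->.
  by apply/comb_adjP; lia.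
- by apply/comb_adjP; lia.
Qed.

Lemma edge_sym x y : e x y -> e y x.
Proof.
move/P_edge=> [[l lP [l1 [l2 E]]] | [P1 [P2 [l1 [l2 E]]]]]; apply/P_edge.
- by left; exists l => //; exists l1, l2; tauto.
- by right; exists P1, P2, l1, l2; tauto.
Qed.

Lemma edge_of_comb_adj i d j d' :
  in_comb i d -> in_comb j d' -> comb_adj i d j d' -> e (vert i d) (vert j d').
Proof.
suff step i1 d1 i2 d2 : in_comb i1 d1 -> in_comb i2 d2 ->
    (i2 = i1 /\ d2 = d1.+1) \/ (d1 = 0 /\ d2 = 0 /\ i2 = i1.+1) -> e (vert i1 d1) (vert i2 d2).
  move=> ci cj /comb_adjP adj.
  have [fwd | bwd] : ((j = i /\ d' = d.+1) \/ (d = 0 /\ d' = 0 /\ j = i.+1)) \/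
                     ((i = j /\ d = d'.+1) \/ (d' = 0 /\ d = 0 /\ i = j.+1)) by lia.
  - exact: step.
  - exact/edge_sym/step.
have head_leg k : k < size P -> vert k 0 :: behead (nth [::] P k) = nth [::] P k.
  by move/leg_len_gt0; rewrite /vert /leg_len; case: (nth _ _ _).
move=> ci cj [[? ?] | [? [? ?]]]; subst; move: ci cj => /andP[lt_iP _] /andP[lt_jP lt_dj];
  apply/P_edge.
- left; exists (nth [::] P i1); first by rewrite mem_nth.
  by exists (take d1 (nth [::] P i1)), (drop d1.+2 (nth [::] P i1)); left; exact: cat_take_nth2_drop.
- right; exists (take i1 P), (drop i1.+2 P), (behead (nth [::] P i1)), (behead (nth [::] P i1.+1)).
  by left; rewrite !head_leg //; exact: cat_take_nth2_drop.
Qed.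

Definition coord_dist x y := comb_dist (leg_of x) (depth_of x) (leg_of y) (depth_of y).

Lemma coord_dist_vert i d j d' :
  in_comb i d -> in_comb j d' -> coord_dist (vert i d) (vert j d') = comb_dist i d j d'.
Proof.
by move=> ci cj; rewrite /coord_dist; case: (coord_vert ci) (coord_vert cj) => -> -> [-> ->].
Qed.

Lemma coord_dist_path s x : path e x s -> coord_dist x (last x s) <= size s.
Proof.
elim: s x => [|z s IH] x /=; first by rewrite /coord_dist /comb_dist eqxx; lia.
move=> /andP[/comb_adj_of_edge/comb_dist_adj exz /IH].
by have := exz (leg_of (last z s)) (depth_of (last z s)); rewrite /coord_dist; lia.
Qed.

Lemma coord_dist_le_walk k x y : walkb e k x y -> coord_dist x y <= k.
Proof. by case/existsP=> p /andP[/coord_dist_path + /eqP <-]; rewrite size_tuple. Qed.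

Lemma comb_dist_step i d j d' k : in_comb i d -> in_comb j d' -> comb_dist i d j d' = k.+1 ->
  exists i' d'', [/\ in_comb i' d'', comb_adj i d i' d'' & comb_dist i' d'' j d' = k].
Proof.
move=> /andP[lt_iP lt_di] /andP[lt_jP lt_dj]; rewrite /comb_dist.
have [eq_ij | ne_ij] := eqVneq i j => dist_k.
  subst j; have [lt_dd | lt_dd | eq_dd] := ltngtP d d'; last by lia.
  - exists i, d.+1; split; rewrite /in_comb /comb_dist ?eqxx ?lt_iP //=; try lia.
    by apply/comb_adjP; lia.
  - exists i, d.-1; split; rewrite /in_comb /comb_dist ?eqxx ?lt_iP //=; try lia.
    by apply/comb_adjP; lia.
have [d0 | d_gt0] := posnP d; last first.
  exists i, d.-1; split; rewrite /in_comb /comb_dist ?(negbTE ne_ij) ?lt_iP //=; try lia.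
  by apply/comb_adjP; lia.
subst d; have [lt_ij | lt_ji | eq_ij] := ltngtP i j; last by rewrite eq_ij eqxx in ne_ij.
- have lt_iP' : i.+1 < size P by lia.
  exists i.+1, 0; split; first by rewrite /in_comb lt_iP' leg_len_gt0.
    by apply/comb_adjP; lia.
  by rewrite /comb_dist; case: eqP; lia.
- have lt_iP' : i.-1 < size P by lia.
  exists i.-1, 0; split; first by rewrite /in_comb lt_iP' leg_len_gt0.
    by apply/comb_adjP; lia.
  by rewrite /comb_dist; case: eqP; lia.
Qed.

Lemma walkb_comb_dist i d j d' :
  in_comb i d -> in_comb j d' -> walkb e (comb_dist i d j d') (vert i d) (vert j d').
Proof.
move=> ci cj.
have walk k i1 d1 : in_comb i1 d1 -> comb_dist i1 d1 j d' = k ->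
    exists2 s : seq T, size s = k & path e (vert i1 d1) s && (last (vert i1 d1) s == vert j d').
  elim: k i1 d1 => [|k IH] i1 d1 ci1 dist_k.
    by case: (comb_dist_eq0 dist_k) => -> ->; exists [::] => //=; rewrite eqxx.
  have [i2 [d2 [ci2 adj12 dist_2]]] := comb_dist_step ci1 cj dist_k.
  have [s size_s /andP[path_s last_s]] := IH i2 d2 ci2 dist_2.
  exists (vert i2 d2 :: s); first by rewrite /= size_s.
  by rewrite /= path_s last_s !andbT; exact: edge_of_comb_adj.
have [s size_s walk_s] := walk _ i d ci erefl.
by apply/existsP; exists (Tuple (introT eqP size_s)).
Qed.

Lemma card_comb_sumn : #|T| = sumn (map size P).
Proof.
rewrite cardE (perm_size (uniq_perm (enum_uniq _) P_uniq _)) ?size_flatten //.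
by move=> x; rewrite mem_enum P_cover.
Qed.

Lemma card_comb : #|T| = \sum_(i < size P) leg_len i.
Proof. by rewrite card_comb_sumn sumnE big_map (big_nth [::]) big_mkord. Qed.

Lemma comb_dist_lt_card i d j d' : in_comb i d -> in_comb j d' -> comb_dist i d j d' < #|T|.
Proof.
rewrite card_comb_sumn /in_comb /leg_len /comb_dist => /andP[lt_iP lt_di] /andP[lt_jP lt_dj].
have [eq_ij | ne_ij] := eqVneq i j; first by subst j; have := size_nth_le_sumn lt_iP; lia.
have [lt_ij | lt_ji | eq_ij] := ltngtP i j; [have := size_nth2_le_sumn P_legs lt_ij lt_jP |
  have := size_nth2_le_sumn P_legs lt_ji lt_iP | by rewrite eq_ij eqxx in ne_ij].
(* Naming the leg sizes makes [lia] identify them across the instances of [eqType] in play. *)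
all: move: lt_di lt_dj; set Li := size (nth [::] P i); set Lj := size (nth [::] P j).
all: set S := sumn _; lia.
Qed.

Lemma dist_vert i d j d' :
  in_comb i d -> in_comb j d' -> Defs.dist e (vert i d) (vert j d') = comb_dist i d j d'.
Proof.
move=> ci cj; apply: find_iota_first; [exact: comb_dist_lt_card | exact: walkb_comb_dist |].
by move=> k lt_k; apply/negP => /coord_dist_le_walk; rewrite coord_dist_vert //; lia.
Qed.

Lemma dist_sym x y : Defs.dist e x y = Defs.dist e y x.
Proof.
case: (in_comb_coord x) (in_comb_coord y) => cx <- [cy <-].
by rewrite !dist_vert // comb_dist_sym.
Qed.

Definition vertp (c : nat * nat) := vert c.1 c.2.

Lemma homometric_image (cs : seq (nat * nat)) (f : nat * nat -> nat * nat) :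
  uniq cs -> uniq (map f cs) -> {in cs, forall c, in_comb c.1 c.2} ->
  {in cs, forall c, in_comb (f c).1 (f c).2} ->
  {in cs &, forall c c', comb_dist (f c).1 (f c).2 (f c').1 (f c').2 = comb_dist c.1 c.2 c'.1 c'.2} ->
  {in cs, forall c, f c \notin cs} ->
  homometric e [set:: map vertp cs] [set:: map vertp (map f cs)] /\ #|[set:: map vertp cs]| = size cs.
Proof.
move=> cs_uniq fcs_uniq cs_comb fcs_comb f_iso f_out.
have vertp_inj : {in [pred c | in_comb c.1 c.2] &, injective vertp}.
  by move=> [i d] [j d'] ci cj /(vert_inj ci cj) /= [-> ->].
have vcs_uniq : uniq (map vertp cs).
  by rewrite (map_inj_in_uniq (fun c c' hc hc' => vertp_inj c c' (cs_comb c hc) (cs_comb c' hc'))).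
have vfcs_uniq : uniq (map vertp (map f cs)).
  rewrite (map_inj_in_uniq _) // => c c' /mapP[a ha ->] /mapP[a' ha' ->].
  exact: vertp_inj (fcs_comb a ha) (fcs_comb a' ha').
have card_vcs : #|[set:: map vertp cs]| = size cs by rewrite cardsE (card_uniqP vcs_uniq) size_map.
have card_vfcs : #|[set:: map vertp (map f cs)]| = size cs.
  by rewrite cardsE (card_uniqP vfcs_uniq) !size_map.
split=> //; split; [|split; first by rewrite card_vcs card_vfcs].
- rewrite disjoint_subset; apply/subsetP => x; rewrite !inE => /mapP[c hc ->].
  apply/negP => /mapP[_ /mapP[c' hc' ->] /(vertp_inj _ _ (cs_comb c hc) (fcs_comb c' hc')) Ec].
  by move: (f_out c' hc'); rewrite -Ec hc.
- apply: (perm_trans (profile_uniq dist_sym vcs_uniq)); rewrite perm_sym.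
  apply: (perm_trans (profile_uniq dist_sym vfcs_uniq)); rewrite !pair_image_map.
  rewrite (eq_in_pair_image (g := fun c c' => Defs.dist e (vertp c) (vertp c'))) // => c c' hc hc' /=.
  rewrite /vertp !dist_vert; first exact: f_iso.
  all: by [apply: cs_comb | apply: fcs_comb].
Qed.

Lemma homometric_leg_halves i : i < size P ->
  exists A B : {set T}, homometric e A B /\ #|A| = leg_len i %/ 2.
Proof.
move=> lt_iP; set h := leg_len i %/ 2.
have [|||||| hom card_A] := @homometric_image [seq (i, d) | d <- iota 0 h] (fun c => (c.1, c.2 + h)).
- by rewrite map_inj_uniq ?iota_uniq // => a b [].
- by rewrite -map_comp map_inj_uniq ?iota_uniq // => a b /= [] /addIn.
- by move=> c /mapP[d]; rewrite mem_iota => lt_dh ->; rewrite /in_comb lt_iP /=; lia.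
- by move=> c /mapP[d]; rewrite mem_iota => lt_dh ->; rewrite /in_comb lt_iP /=; lia.
- by move=> c c' /mapP[d _ ->] /mapP[d' _ ->]; rewrite /comb_dist /= eqxx; lia.
- move=> c /mapP[d]; rewrite mem_iota => lt_dh ->; apply/negP => /mapP[d'].
  by rewrite mem_iota => lt_d'h [E]; lia.
by do 2 eexists; split; first exact: hom; rewrite card_A size_map size_iota.
Qed.

Definition shift_coords s b :=
  [seq (i, d) | i <- iota 0 (size P), d <- iota 0 (shift_weight (size P) leg_len s b i)].

Lemma mem_shift_coords s b c : c \in shift_coords s b -> exists i d,
  [/\ c = (i, d), i + s < size P, odd (i %/ s) = b & d < minn (leg_len i) (leg_len (i + s))].
Proof.
case/allpairsPdep=> i [d [_ + ->]]; rewrite mem_iota /shift_weight.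
by case: ifP => [/andP[lt_isP /eqP odd_b] | _] /andP[_ lt_d]; [exists i, d | lia].
Qed.

Lemma homometric_spine_shift s b : 0 < s ->
  exists A B : {set T},
    homometric e A B /\ #|A| = \sum_(i < size P) shift_weight (size P) leg_len s b i.
Proof.
move=> s_gt0; set cs := shift_coords s b.
have cs_uniq : uniq cs.
  apply: allpairs_uniq_dep => [|i _|]; rewrite ?iota_uniq //.
  by move=> [i1 d1] [i2 d2] _ _ [/= -> ->].
have [||||| hom card_A] := @homometric_image cs (fun c => (c.1 + s, c.2)) cs_uniq.
- by rewrite map_inj_uniq // => [[i1 d1] [i2 d2]] [/addIn -> ->].
- by move=> c /mem_shift_coords [i [d [-> lt_isP _ lt_d]]]; rewrite /in_comb /=; lia.
- by move=> c /mem_shift_coords [i [d [-> lt_isP _ lt_d]]]; rewrite /in_comb /=; lia.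
- move=> c c' /mem_shift_coords [i [d [-> _ _ _]]] /mem_shift_coords [i' [d' [-> _ _ _]]].
  by rewrite /comb_dist /= eqn_add2r; case: eqP => _; lia.
- (* [(i + s) %/ s = (i %/ s).+1]: the image lies in blocks of the other parity. *)
  move=> c /mem_shift_coords [i [d [-> _ odd_b _]]].
  apply/negP => /mem_shift_coords [_ [_ [[<- _] _ + _]]].
  by rewrite -[X in (i + X) %/ _]mul1n addnC divnMDl // oddD odd_b; case: (b).
exists [set:: map vertp cs], [set:: map vertp (map (fun c => (c.1 + s, c.2)) cs)]; split=> //.
rewrite card_A size_allpairs_dep sumnE big_map -(big_mkord xpredT) /index_iota subn0.
by apply: eq_bigr => i _; rewrite size_iota.
Qed.

Lemma exists_homometric_large : P != [::] -> exists A B : {set T}, homometric e A B /\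
  #|T| * #|T| <= 2 * (2 * #|A| + 1) * (2 * #|A| + 1) * (4 * #|A| + 1).
Proof.
move=> P_ne; set m := size P; have m_gt0 : 0 < m by rewrite lt0n size_eq0.
set sizes := [seq leg_len i %/ 2 | i <- iota 0 m] ++
  [seq \sum_(i < m) shift_weight m leg_len s b i | s <- iota 1 m.-1, b <- [:: true; false]].
have [|X X_sizes X_max] := @exists_argmax_seq _ idfun sizes.
  by rewrite -size_eq0 size_cat size_map size_iota; lia.
have [A [B [hom card_A]]] : exists A B : {set T}, homometric e A B /\ #|A| = X.
  move: X_sizes; rewrite mem_cat => /orP[/mapP[i] | /allpairsPdep[s [b [+ _ ->]]]]; rewrite mem_iota.
  - by move=> /andP[_ lt_im] ->; exact: homometric_leg_halves.
  - by move=> /andP[s_gt0 _]; exact: homometric_spine_shift.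
exists A, B; split=> //; rewrite card_comb card_A.
apply: sqr_sum_le_shift_weights => // [i lt_im | i lt_im | s b s_gt0 lt_sm].
- exact: leg_len_gt0.
- apply: X_max; rewrite mem_cat; apply/orP; left.
  by apply: (map_f (fun i => leg_len i %/ 2)); rewrite mem_iota.
- apply: X_max; rewrite mem_cat; apply/orP; right.
  apply: (allpairs_f (fun s b => \sum_(i < m) shift_weight m leg_len s b i)); last by case: b.
  by rewrite mem_iota; lia.
Qed.

End Haircomb.

Theorem theorem2 :
  exists c : R, (0 < c)%R /\
    forall (T : finType) (e : rel T),
      haircomb e -> 2 <= #|T| ->
      exists A B : {set T},
        homometric e A B /\
        (c * Rpower (INR #|T|) (2 / 3) <= INR #|A|)%R /\
        (c * Rpower (INR #|T|) (2 / 3) <= INR #|B|)%R.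
Proof.
exists (1 / 5)%R; split; first lra.
move=> T e [P [P_ne P_legs P_uniq P_cover P_edge]] card_ge2.
have /card_gt0P[x0 _] : 0 < #|T| by lia.
have [A [B [hom count]]] := exists_homometric_large x0 P_legs P_uniq P_cover P_edge P_ne.
have card_cube : #|T| * #|T| <= 125 * (#|A| * #|A| * #|A|).
  by move: count; case: #|A| => [|k]; nia.
have [_ [card_AB _]] := hom.
have bound := Rpower_two_thirds_le (ltnW card_ge2) card_cube.
by exists A, B; rewrite -card_AB.
Qed.
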